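(* For every integer $n\geq 2$, $LD(P_2\square P_n)\geq \left\lceil \frac{3n-1}{4}\right\rceil$.
   Context: $P_n$ is the path on $n$ vertices and $\square$ is the Cartesian product of graphs. For a graph $G$, $C\subseteq V(G)$ and $v\in V(G)$ let $I(v)=N[v]\cap C$ ($N[v]$ the closed neighborhood). $C$ is a locating-dominating set if $I(v)\neq\emptyset$ for all $v\in V(G)\setminus C$ and $I(u)\neq I(v)$ for all distinct $u,v\in V(G)\setminus C$. $LD(G)$ is the minimum cardinality of a locating-dominating set of $G$. *)

From mathcomp Require Import all_boot.
Set Implicit Arguments. Unset Strict Implicit. Unset Printing Implicit Defensive.

Section LD.
Variables (T : finType) (adj : rel T).

Definition closed_nbhd (v : T) : {set T} := [set u | (u == v) || adj v u].

Definition Iset (C : {set T}) (v : T) : {set T} := closed_nbhd v :&: C.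

Definition is_locdom (C : {set T}) : bool :=
  [forall v, (v \notin C) ==> (Iset C v != set0)] &&
  [forall u, forall v, [&& u \notin C, v \notin C & u != v] ==> (Iset C u != Iset C v)].

(* LD(G): minimum cardinality of a locating-dominating set
   (V(G) itself is always one, so #|T| is a valid default). *)
Definition LD : nat := \big[minn/#|T|]_(C : {set T} | is_locdom C) #|C|.
End LD.

Definition cart_adj (A B : finType) (a : rel A) (b : rel B) : rel (A * B) :=
  fun x y => ((x.1 == y.1) && b x.2 y.2) || (a x.1 y.1 && (x.2 == y.2)).

Definition path_adj (n : nat) : rel 'I_n :=
  fun i j => (i.+1 == j :> nat) || (j.+1 == i :> nat).

Arguments path_adj : clear implicits.
Definition P2Pn_adj (n : nat) : rel ('I_2 * 'I_n) :=
  cart_adj (path_adj 2) (path_adj n).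
Arguments P2Pn_adj : clear implicits.

From mathcomp Require Import all_boot zify.
Set Implicit Arguments. Unset Strict Implicit. Unset Printing Implicit Defensive.

(* Read P_2 x P_n as a strip of columns and code each column by the trace of C
   on it. A locating-dominating set C forces local constraints on every five
   consecutive columns: the middle column is dominated, and the pairs
   (r, i), (r, i + 2) and (r, i), (1 - r, i + 1) are separated. Among the
   finitely many column patterns obeying them, a potential on windows of four
   columns, found by dynamic programming, shows that 4 |C| - 3 (columns read)
   never falls below the potential of the current window minus 6 while the
   strip is read from left to right. Both ends of the strip are empty windows
   of potential 6, hence 3 n <= 4 |C|. *)

Section LocatingDominating.
Variables (T : finType) (adj : rel T).

Lemma locdom_setT : is_locdom adj [set: T].
Proof.
by apply/andP; split; apply/forallP => u; [|apply/forallP => v]; rewrite in_setT.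
Qed.

Lemma LD_lower_bound m : (forall C, is_locdom adj C -> m <= #|C|) -> m <= LD adj.
Proof.
move=> hm; apply: (big_ind (fun x => m <= x)) => [|x y hx hy|C /hm //].
- by rewrite -cardsT hm ?locdom_setT.
- by rewrite leq_min hx hy.
Qed.

Variable C : {set T}.
Hypothesis hC : is_locdom adj C.

Lemma locdom_dominates u : exists2 w, w \in C & w \in closed_nbhd adj u.
Proof.
have [uC|uC] := boolP (u \in C); first by exists u; rewrite // inE eqxx.
case/andP: hC => /forallP /(_ u) /implyP /(_ uC) /set0Pn [w] + _.
by rewrite /Iset in_setI => /andP [wN wC]; exists w.
Qed.

Lemma locdom_separates u v : u \notin C -> v \notin C -> u != v ->
  exists2 w, w \in C & (w \in closed_nbhd adj u) != (w \in closed_nbhd adj v).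
Proof.
move=> uC vC uv; case/andP: hC => _ /forallP /(_ u) /forallP /(_ v).
rewrite uC vC uv /= => /eqP neqI.
case: (pickP [pred w | (w \in C) &&
  ((w \in closed_nbhd adj u) != (w \in closed_nbhd adj v))]) => [w /andP [] | same].
  by exists w.
case: neqI; apply/setP => w; rewrite /Iset !in_setI.
by move: (same w) => /=; case: (w \in C); rewrite ?andbT ?andbF // => /negbFE /eqP.
Qed.

End LocatingDominating.

(* A column is coded by 0 when it lies outside the grid, and otherwise by
   1 + top + 2 * bottom, where top and bottom tell which of its two vertices
   are in C. *)
Definition in_grid (s : nat) : bool := 0 < s.
Definition has_bit (r s : nat) : bool := (s == 4) || (s == 2 + r).
Definition weight (s : nat) : nat := has_bit 0 s + has_bit 1 s.

(* For each row r, with s1 the column of the vertex (r, i): (r, i + 1) is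
   dominated, and (r, i) is separated from (r, i + 2) and from (1 - r, i + 1),
   whenever these vertices lie in the grid outside C. *)
Definition window_ok (s0 s1 s2 s3 s4 : nat) : bool :=
  all (fun r =>
   [&& in_grid s2 ==> [|| has_bit 0 s2, has_bit 1 s2, has_bit r s1 | has_bit r s3],
       [&& in_grid s1, in_grid s3, ~~ has_bit r s1 & ~~ has_bit r s3] ==>
         [|| has_bit r s0, has_bit (1 - r) s1, has_bit r s4 | has_bit (1 - r) s3] &
       [&& in_grid s1, in_grid s2, ~~ has_bit r s1 & ~~ has_bit (1 - r) s2] ==>
         has_bit r s0 || has_bit (1 - r) s3]) [:: 0; 1].

Definition codes : seq nat := iota 0 5.

Definition omin (x y : option nat) : option nat :=
  match x, y with
  | Some a, Some b => Some (minn a b)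
  | Some a, None => Some a
  | None, _ => y
  end.

Definition tabulate (f : nat -> nat -> nat -> nat -> option nat) :=
  let t := [seq [seq [seq [seq f s0 s1 s2 s3 | s3 <- codes] | s2 <- codes] | s1 <- codes]
           | s0 <- codes] in
  fun s0 s1 s2 s3 => nth None (nth [::] (nth [::] (nth [::] t s0) s1) s2) s3.

(* [potential w - 6] is the least value of 4 |C| - 3 (columns read) over the
   column sequences that start with four empty columns, satisfy [window_ok]
   everywhere and end with the window w ([None] if there is none), computed by
   relaxation. Nothing about this computation is proved (the truncated
   subtraction is harmless): only [potential_valid], checked by evaluation,
   is used. *)
Definition relax (f : nat -> nat -> nat -> nat -> option nat) s1 s2 s3 s4 :=
  foldr omin (f s1 s2 s3 s4)
    [seq if window_ok s0 s1 s2 s3 s4 then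
           omap (fun u => u + 4 * weight s4 - 3 * in_grid s4) (f s0 s1 s2 s3)
         else None | s0 <- codes].

Definition potential : nat -> nat -> nat -> nat -> option nat :=
  iter 8 (fun f => tabulate (relax f))
    (fun s0 s1 s2 s3 => if s0 + s1 + s2 + s3 == 0 then Some 6 else None).

Definition step_ok (pot : nat -> nat -> nat -> nat -> option nat) s0 s1 s2 s3 s4 : bool :=
  if pot s0 s1 s2 s3 is Some u then
    window_ok s0 s1 s2 s3 s4 ==>
    if pot s1 s2 s3 s4 is Some v then v + 3 * in_grid s4 <= u + 4 * weight s4 else false
  else true.

Definition valid_potential (pot : nat -> nat -> nat -> nat -> option nat) : bool :=
  all (fun s0 => all (fun s1 => all (fun s2 => all (fun s3 => all (fun s4 =>
    step_ok pot s0 s1 s2 s3 s4) codes) codes) codes) codes) codes.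

Lemma potential_valid : valid_potential potential.
Proof. by vm_compute. Qed.

Lemma potential0 : potential 0 0 0 0 = Some 6.
Proof. by vm_compute. Qed.

Lemma potential_step s0 s1 s2 s3 s4 u :
  s0 < 5 -> s1 < 5 -> s2 < 5 -> s3 < 5 -> s4 < 5 ->
  window_ok s0 s1 s2 s3 s4 -> potential s0 s1 s2 s3 = Some u ->
  exists2 v, potential s1 s2 s3 s4 = Some v & v + 3 * in_grid s4 <= u + 4 * weight s4.
Proof.
have code x : x < 5 -> x \in codes by rewrite mem_iota.
move=> /code h0 /code h1 /code h2 /code h3 /code h4 ok pot.
move: potential_valid => /allP /(_ _ h0) /allP /(_ _ h1) /allP /(_ _ h2) /allP /(_ _ h3).
move=> /allP /(_ _ h4); rewrite /step_ok pot ok /=.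
by case: (potential s1 s2 s3 s4) => // v; exists v.
Qed.

Section StripBound.
Variable s : nat -> nat.
Hypothesis s_lt5 : forall p, s p < 5.
Hypothesis s_ok : forall k, window_ok (s k) (s k.+1) (s k.+2) (s k.+3) (s k.+4).
Hypothesis s_start : forall p, p < 4 -> s p = 0.

Lemma potential_invariant k :
  exists2 v, potential (s k) (s k.+1) (s k.+2) (s k.+3) = Some v &
    v + 3 * \sum_(0 <= p < k.+4) in_grid (s p) <= 6 + 4 * \sum_(0 <= p < k.+4) weight (s p).
Proof.
elim: k => [|k [u pot_k le_k]].
  exists 6; first by rewrite !s_start ?potential0.
  by rewrite !big1_seq // => p /andP [_]; rewrite mem_index_iota => /andP [_ /s_start ->].
have [v pot_k1 le_step] := potential_step (s_lt5 _) (s_lt5 _) (s_lt5 _) (s_lt5 _)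
  (s_lt5 k.+4) (s_ok k) pot_k.
by exists v => //; rewrite !(big_nat_recr k.+4) //=; lia.
Qed.

Lemma strip_bound m : (forall p, m <= p < m.+4 -> s p = 0) ->
  3 * \sum_(0 <= p < m.+4) in_grid (s p) <= 4 * \sum_(0 <= p < m.+4) weight (s p).
Proof.
move=> s_end; have [v] := potential_invariant m.
rewrite !s_end; try lia.
rewrite potential0 => -[<-]; lia.
Qed.

End StripBound.

Definition near (x y : nat * nat) : bool :=
  (y.2 == x.2) || (y.1 == x.1) && ((y.2.+1 == x.2) || (x.2.+1 == y.2)).

Section Strip.
Variables (n : nat) (C : {set 'I_2 * 'I_n}).

Definition pos (v : 'I_2 * 'I_n) : nat * nat := (v.1 : nat, v.2 + 4).

Definition cell (x : nat * nat) : bool := [exists v in C, pos v == x].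

(* Grid column i is column i + 4 of the strip, which thus starts with four
   empty columns. *)
Definition column (p : nat) : nat :=
  if 4 <= p < n + 4 then 1 + cell (0, p) + 2 * cell (1, p) else 0.

Lemma pos_inj : injective pos.
Proof.
by move=> [a i] [b j] [/ord_inj -> /eqP]; rewrite eqn_add2r => /eqP /ord_inj ->.
Qed.

Lemma P2Pn_nbhdE (u w : 'I_2 * 'I_n) :
  (w \in closed_nbhd (P2Pn_adj n) u) = near (pos u) (pos w).
Proof.
case: u w => [a i] [b j]; rewrite inE /P2Pn_adj /cart_adj /path_adj /near /=.
by rewrite xpair_eqE -!val_eqE /=; have := ltn_ord a; have := ltn_ord b; lia.
Qed.

Lemma cell_pos v : cell (pos v) = (v \in C).
Proof.
apply/exists_inP/idP => [[w wC /eqP /pos_inj <-] // | vC].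
by exists v; rewrite ?eqxx.
Qed.

Lemma cell_range x : cell x -> x.1 < 2 /\ 4 <= x.2 < n + 4.
Proof.
by case/exists_inP => -[a i] _ /eqP <- /=; have := ltn_ord a; have := ltn_ord i; lia.
Qed.

Lemma vertex_at x : x.1 < 2 -> 4 <= x.2 < n + 4 -> exists v, pos v = x.
Proof.
case: x => r p /= hr hp; have hi : p - 4 < n by lia.
by exists (Ordinal hr, Ordinal hi); rewrite /pos /=; congr pair; lia.
Qed.

Lemma has_bit_column r p : r < 2 -> has_bit r (column p) = cell (r, p).
Proof.
rewrite /column; case: ifP => [_|hp] hr.
  by case: r hr => [|[|]] // _; case: (cell (0, p)); case: (cell (1, p)).
by case: (boolP (cell (r, p))) => [/cell_range /= [_]|]; rewrite ?hp.
Qed.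

Lemma in_grid_column p : in_grid (column p) = (4 <= p < n + 4).
Proof. by rewrite /column; case: ifP. Qed.

Lemma column_lt5 p : column p < 5.
Proof. by rewrite /column; case: ifP => //; case: (cell (0, p)); case: (cell (1, p)). Qed.

Lemma sum_column (f : nat -> nat) : f 0 = 0 ->
  \sum_(0 <= p < n.+4.+4) f (column p) = \sum_(i < n) f (column (i + 4)).
Proof.
move=> f0; have zero a b : (b <= 4) || (n + 4 <= a) -> \sum_(a <= p < b) f (column p) = 0.
  move=> hab; rewrite big1_seq // => p /andP [_]; rewrite mem_index_iota => hp.
  by rewrite /column ifF ?f0 //; lia.
rewrite (@big_cat_nat _ _ _ 4) // (@big_cat_nat _ _ _ (n + 4) 4) //=; try lia.
rewrite (zero 0 4) ?(zero (n + 4) n.+4.+4) ?leqnn ?orbT // add0n addn0.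
by rewrite -{1}[4]add0n big_addn addnK big_mkord.
Qed.

Lemma sum_in_grid_column : \sum_(0 <= p < n.+4.+4) in_grid (column p) = n.
Proof.
rewrite (sum_column (f := fun s => in_grid s)) // -[RHS]card_ord -sum1_card.
by apply: eq_bigr => i _; rewrite in_grid_column leq_addl ltn_add2r ltn_ord.
Qed.

Lemma sum_weight_column : \sum_(0 <= p < n.+4.+4) weight (column p) = #|C|.
Proof.
rewrite (sum_column (f := weight)) // -sum1_card [RHS]big_mkcond /=.
rewrite (eq_bigr (fun v => nat_of_bool ((v.1, v.2) \in C))); last by case.
rewrite -(pair_bigA _ (fun a i => nat_of_bool ((a, i) \in C))) /=.
rewrite !big_ord_recl big_ord0 addn0 -big_split /=.
by apply: eq_bigr => i _; rewrite /weight !has_bit_column // -!cell_pos.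
Qed.

Hypothesis hC : is_locdom (P2Pn_adj n) C.

Lemma cell_dominating x : x.1 < 2 -> 4 <= x.2 < n + 4 -> exists2 y, cell y & near x y.
Proof.
move=> hr hp; have [u <-] := vertex_at hr hp.
have [w wC wN] := locdom_dominates hC u.
by exists (pos w); rewrite ?cell_pos -?P2Pn_nbhdE.
Qed.

Lemma cell_locating x y :
  x.1 < 2 -> 4 <= x.2 < n + 4 -> y.1 < 2 -> 4 <= y.2 < n + 4 -> x != y ->
  ~~ cell x -> ~~ cell y ->
  exists2 z, cell z & [&& z != x, z != y & near x z != near y z].
Proof.
move=> hxr hxp hyr hyp; have [u <-] := vertex_at hxr hxp; have [v <-] := vertex_at hyr hyp.
rewrite !cell_pos => xy uC vC; have uv : u != v by apply: contra_neq xy => ->.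
have [w wC wN] := locdom_separates hC uC vC uv.
exists (pos w); rewrite ?cell_pos // !(inj_eq pos_inj) -!P2Pn_nbhdE wN andbT.
by apply/andP; split; [apply: contraNneq uC | apply: contraNneq vC] => <-.
Qed.

Lemma cell_dominated r p : r < 2 -> 4 <= p < n + 4 ->
  [|| cell (0, p), cell (1, p), cell (r, p.-1) | cell (r, p.+1)].
Proof.
move=> hr hp; have [[a q] cz nz] := cell_dominating (x := (r, p)) hr hp.
suff: has cell [:: (0, p); (1, p); (r, p.-1); (r, p.+1)] by rewrite /= orbF.
apply/hasP; exists (a, q) => //; have [/= ha _] := cell_range cz.
by move: nz; rewrite /near !inE !xpair_eqE /=; lia.
Qed.

Lemma cell_separated_row r p : r < 2 -> 4 <= p < n + 4 -> 4 <= p.+2 < n + 4 ->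
  ~~ cell (r, p) -> ~~ cell (r, p.+2) ->
  [|| cell (r, p.-1), cell (1 - r, p), cell (r, p.+3) | cell (1 - r, p.+2)].
Proof.
move=> hr hp hq nu nv.
have [|[a q] cz zxy] :=
  cell_locating (x := (r, p)) (y := (r, p.+2)) hr hp hr hq _ nu nv.
  by rewrite xpair_eqE; lia.
suff: has cell [:: (r, p.-1); (1 - r, p); (r, p.+3); (1 - r, p.+2)] by rewrite /= orbF.
apply/hasP; exists (a, q) => //; have [/= ha _] := cell_range cz.
by move: zxy; rewrite /near !inE !xpair_eqE /=; lia.
Qed.

Lemma cell_separated_diag r p : r < 2 -> 4 <= p < n + 4 -> 4 <= p.+1 < n + 4 ->
  ~~ cell (r, p) -> ~~ cell (1 - r, p.+1) -> cell (r, p.-1) || cell (1 - r, p.+2).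
Proof.
move=> hr hp hq nu nv; have hr' : 1 - r < 2 by lia.
have [|[a q] cz zxy] :=
  cell_locating (x := (r, p)) (y := (1 - r, p.+1)) hr hp hr' hq _ nu nv.
  by rewrite xpair_eqE; lia.
suff: has cell [:: (r, p.-1); (1 - r, p.+2)] by rewrite /= orbF.
apply/hasP; exists (a, q) => //; have [/= ha _] := cell_range cz.
by move: zxy; rewrite /near !inE !xpair_eqE /=; lia.
Qed.

Lemma window_ok_column k :
  window_ok (column k) (column k.+1) (column k.+2) (column k.+3) (column k.+4).
Proof.
apply/allP => r; rewrite !inE => r01 /=.
have hr : r < 2 by lia.
have hr' : 1 - r < 2 by lia.
rewrite !in_grid_column !has_bit_column //; apply/and3P; split; apply/implyP.
- exact: cell_dominated.
- by case/and4P; apply: cell_separated_row.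
- by case/and4P; apply: cell_separated_diag.
Qed.

Lemma P2Pn_locdom_card : 3 * n <= 4 * #|C|.
Proof.
rewrite -[X in 3 * X]sum_in_grid_column -sum_weight_column.
by apply: (strip_bound column_lt5 window_ok_column) => p hp; rewrite /column ifF //; lia.
Qed.

End Strip.

Theorem lemma4p6 (n : nat) (hn : 2 <= n) :
  (3 * n + 2) %/ 4 <= LD (P2Pn_adj n).
Proof.
(* The bound 3 n <= 4 |C| holds for every n. *)
apply: LD_lower_bound => C hC.
by have := P2Pn_locdom_card hC; set c := #|_|; lia.
Qed.
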